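(* Let $n\ge 2$. No smooth Frobenius nonclassical hypersurface $X\subset\mathbb{P}^n$ over $\mathbb{F}_q$ of degree $q+2$ has separated variables.
   Context: A hypersurface $X=\{F=0\}\subset\mathbb{P}^n$ over $\mathbb{F}_q$ ($F$ homogeneous) is Frobenius nonclassical if $F$ divides $\sum_{i=0}^n x_i^q\frac{\partial F}{\partial x_i}$. $X$ has separated variables if, after a projective linear change of coordinates over $\mathbb{F}_q$, $F=G(x_0,\dots,x_m)+H(x_{m+1},\dots,x_n)$ for some $m\in\{0,\dots,n-1\}$. *)

From HB Require Import structures.
From mathcomp Require Import all_boot all_order all_algebra all_field.
From mathcomp Require Export mpoly.
Set Implicit Arguments. Unset Strict Implicit. Unset Printing Implicit Defensive.
Import Order.TTheory GRing.Theory.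
Local Open Scope ring_scope.

(* Homogeneous coordinates x_0..x_n are the variables 'X_i, i : 'I_(n.+1). *)

Definition frob_nonclassical (K : finFieldType) (n : nat)
    (F : {mpoly K[n.+1]}) : Prop :=
  exists G : {mpoly K[n.+1]},
    \sum_(i < n.+1) 'X_i ^+ #|K| * mderiv i F = G * F.

(* Smoothness of the hypersurface {F = 0}: no geometric point (over any
   algebraically closed field L containing K) at which F and all its
   partial derivatives vanish. *)
Definition smooth_hypersurface (K : fieldType) (n : nat)
    (F : {mpoly K[n.+1]}) : Prop :=
  forall (L : closedFieldType) (f : {rmorphism K -> L}) (x : 'I_(n.+1) -> L),
    (exists i, x i != 0) ->
    ~ ((map_mpoly f F).@[x] = 0 /\
       forall i : 'I_(n.+1), (map_mpoly f (mderiv i F)).@[x] = 0).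

Definition vars_in (K : ringType) (n : nat) (P : pred 'I_n)
    (p : {mpoly K[n]}) : Prop :=
  forall m, m \in msupp p -> forall i : 'I_n, (m i != 0)%N -> P i.

Definition lin_subst (K : ringType) (n : nat) (A : 'M[K]_n) : n.-tuple {mpoly K[n]} :=
  [tuple \sum_(j < n) (A i j)%:MP * 'X_j | i < n].

Definition separated_variables (K : fieldType) (n : nat)
    (F : {mpoly K[n.+1]}) : Prop :=
  exists (A : 'M[K]_(n.+1)) (m : nat) (G H : {mpoly K[n.+1]}),
    [/\ A \in unitmx, (m < n)%N,
        vars_in (fun i : 'I_(n.+1) => (i <= m)%N) G,
        vars_in (fun i : 'I_(n.+1) => (m < i)%N) H &
        F \mPo lin_subst A = G + H].

From HB Require Import structures.
From mathcomp Require Import all_boot all_order all_algebra all_field.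
From mathcomp Require Import fingroup pgroup cyclic abelian mpoly zify.
Set Implicit Arguments. Unset Strict Implicit. Unset Printing Implicit Defensive.
Import GRing.Theory FinRing.Theory.
Local Open Scope ring_scope.

(* Write F' = F o A = G + H with G in the variables x_S and H in x_T. Because
   the entries of A satisfy a^q = a, F' is still Frobenius nonclassical:
   sum_i x_i^q dF'/dx_i = C' F'. If H <> 0, compare coefficients at g + mu
   with g an S-monomial of degree q - 1 and mu a T-monomial of F': the left
   side only has mixed monomials, so C' has no S-part of degree q - 1 and
   sum_i x_i^q dG/dx_i = 0. Its coefficients at x_0^(2q+1) and x_0^(2q) x_k
   (using q = 0 in K) say that every dF'/dx_k vanishes at e_0; symmetrically
   every dF'/dx_k vanishes at e_(m+1) if G <> 0. On the line through e_0 and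
   e_(m+1) the separation leaves F' = a s^(q+2) + b t^(q+2) and
   dF'/dx_k = a_k s^(q+1) + b_k t^(q+1), so a root (s : t) of the first form
   is a singular point. If H = 0 then e_(m+1) itself is singular, and
   symmetrically if G = 0. *)

Section FiniteField.
Variable K : finFieldType.

Lemma card_finField_pnat : [pchar K].-nat #|K|.
Proof.
have [p _ pcharKp] := finPcharP K.
have := abelem_pgroup (fin_ring_pchar_abelem pcharKp).
rewrite pgroupE cardsT; apply: sub_in_pnat => r _.
by rewrite inE => /eqP ->.
Qed.

Lemma natr_card_finField : #|K|%:R = 0 :> K.
Proof. by rewrite -zmodXgE -cardsT expg_cardG ?inE. Qed.

End FiniteField.

Definition frob_deriv (R : nzRingType) (N q : nat) (p : {mpoly R[N]}) :=
  \sum_(i < N) 'X_i ^+ q * mderiv i p.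

Section LinearSubstitution.
Variables (R : comNzRingType) (N : nat) (A : 'M[R]_N).
Implicit Types (p r : {mpoly R[N]}).
Local Notation L := (lin_subst A).

Lemma lin_substX i : 'X_i \mPo L = \sum_j (A i j)%:MP * 'X_j.
Proof. by rewrite comp_mpolyXU -tnth_nth tnth_mktuple. Qed.

Lemma mderivXU k i : mderiv k ('X_i : {mpoly R[N]}) = (i == k)%:R.
Proof.
rewrite mderivX mnm1E; case: eqP => [->|_]; last by rewrite scale0r.
by rewrite (_ : U_(k) - U_(k) = 0)%MM ?mpolyX0 ?scale1r //; apply/mnmP => j; rewrite !mnmE subnn.
Qed.

Let chain_rule_at p := forall k,
  mderiv k (p \mPo L) = \sum_i A i k *: (mderiv i p \mPo L).

Let chain_rule_at0 : chain_rule_at 0.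
Proof.
by move=> k; rewrite comp_mpoly0 mderiv0 big1 // => i _; rewrite mderiv0 comp_mpoly0 scaler0.
Qed.

Let chain_rule_at1 : chain_rule_at 1.
Proof.
move=> k; rewrite rmorph1 -mpolyC1 mderivC big1 // => i _.
by rewrite mderivC comp_mpolyC mpolyC0 scaler0.
Qed.

Let chain_rule_atX j : chain_rule_at 'X_j.
Proof.
move=> k; rewrite lin_substX raddf_sum (bigD1 k) //= big1 => [|l /negbTE lk]; last first.
  by rewrite mderiv_mulC mderivXU lk mulr0.
rewrite (bigD1 j) //= big1 => [|i /negbTE ij]; last first.
  by rewrite mderivXU eq_sym ij comp_mpoly0 scaler0.
by rewrite mderiv_mulC !mderivXU !eqxx comp_mpoly1 !addr0 mulr1 -mul_mpolyC mulr1.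
Qed.

Let chain_rule_atD p r : chain_rule_at p -> chain_rule_at r -> chain_rule_at (p + r).
Proof.
move=> hp hr k; rewrite comp_mpolyD mderivD hp hr -big_split /=.
by apply: eq_bigr => i _; rewrite mderivD comp_mpolyD scalerDr.
Qed.

Let chain_rule_atM p r : chain_rule_at p -> chain_rule_at r -> chain_rule_at (p * r).
Proof.
move=> hp hr k; rewrite rmorphM mderivM hp hr mulr_suml mulr_sumr -big_split /=.
apply: eq_bigr => i _; rewrite mderivM rmorphD !rmorphM scalerDr.
by rewrite -scalerAl -scalerAr.
Qed.

Let chain_rule_atZ c p : chain_rule_at p -> chain_rule_at (c *: p).
Proof.
move=> hp k; rewrite comp_mpolyZ mderivZ hp scaler_sumr.
by apply: eq_bigr => i _; rewrite mderivZ comp_mpolyZ !scalerA mulrC.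
Qed.

Lemma mderiv_lin_subst p k :
  mderiv k (p \mPo L) = \sum_i A i k *: (mderiv i p \mPo L).
Proof.
suff : chain_rule_at p by []; rewrite (mpolyE p).
apply: big_ind => [|r1 r2|m _]; [exact: chain_rule_at0 | exact: chain_rule_atD|].
apply: chain_rule_atZ; rewrite mpolyXE_id.
apply: big_ind => [|r1 r2|i _]; [exact: chain_rule_at1 | exact: chain_rule_atM|].
elim: (m i) => [|e IHe]; first by rewrite expr0; apply: chain_rule_at1.
by rewrite exprS; apply: chain_rule_atM (chain_rule_atX i) IHe.
Qed.

Lemma dhomog_lin_subst p d : p \is d.-homog -> p \mPo L \is d.-homog.
Proof.
move=> /dhomogP p_homog; rewrite comp_mpolyEX big_seq; apply: rpred_sum => m m_supp.
apply: rpredZ; rewrite comp_mpolyX; move/p_homog: m_supp => /= <-; rewrite mdegE.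
apply: (big_ind2 (fun (r : {mpoly R[N]}) e => r \is e.-homog)) => [|r1 r2 e1 e2|i _].
- exact: dhomog1.
- exact: dhomogM.
rewrite -[X in X.-homog]mul1n; apply: dhomogMn.
rewrite tnth_mktuple; apply: rpred_sum => j _; rewrite mul_mpolyC; apply: rpredZ.
by rewrite dhomogX; apply/eqP; apply: mdeg1.
Qed.

End LinearSubstitution.

Section FrobeniusLinearSubstitution.
Variables (K : finFieldType) (N : nat) (A : 'M[K]_N).
Local Notation q := #|K|.
Local Notation L := (lin_subst A).

Lemma sum_expr_card (s : 'I_N -> {mpoly K[N]}) : (\sum_i s i) ^+ q = \sum_i s i ^+ q.
Proof.
have pnat_q : [pchar {mpoly K[N]}].-nat q.
  apply: sub_in_pnat (card_finField_pnat K) => p _.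
  exact: (rmorph_pchar (@mpolyC N K)).
apply: (big_morph (fun x => x ^+ q)) => [x y|]; first exact: exprDn_pchar.
by rewrite expr0n gtn_eqF // ltnW // finNzRing_gt1.
Qed.

Lemma lin_substX_card i : 'X_i ^+ q \mPo L = \sum_k (A i k)%:MP * 'X_k ^+ q.
Proof.
rewrite rmorphXn /= lin_substX sum_expr_card; apply: eq_bigr => k _.
by rewrite exprMn -rmorphXn /= expf_card.
Qed.

Lemma frob_deriv_lin_subst (p C : {mpoly K[N]}) :
  frob_deriv q p = C * p -> frob_deriv q (p \mPo L) = (C \mPo L) * (p \mPo L).
Proof.
rewrite /frob_deriv -rmorphM => <-; rewrite rmorph_sum /=.
under eq_bigr => k _ do rewrite mderiv_lin_subst mulr_sumr.
rewrite exchange_big /=; apply: eq_bigr => i _.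
rewrite rmorphM /= lin_substX_card mulr_suml; apply: eq_bigr => k _.
by rewrite -scalerAr -mul_mpolyC !mulrA [_ * 'X_k ^+ _]mulrC.
Qed.

End FrobeniusLinearSubstitution.

Definition mnm_within (N : nat) (S : pred 'I_N) (m : 'X_{1..N}) :=
  [forall j, (0 < m j)%N ==> S j].

Definition separated (R : nzRingType) (N : nat) (S T : pred 'I_N) (p : {mpoly R[N]}) :=
  {in msupp p, forall m, mnm_within S m || mnm_within T m}.

Section Monomials.
Variable N : nat.
Implicit Types (S : pred 'I_N) (a b c : 'X_{1..N}).

Lemma mnm_withinP S a : reflect (forall j, (0 < a j)%N -> S j) (mnm_within S a).
Proof. by apply: (iffP forallP) => h j; [exact/implyP | apply/implyP; exact: h]. Qed.

Lemma mnm_within_out S a j : mnm_within S a -> ~~ S j -> a j = 0%N.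
Proof. by move=> /mnm_withinP aS; apply: contraNeq; rewrite -lt0n; apply: aS. Qed.

Lemma mdeg_lem a b : (a <= b)%MM -> (mdeg a <= mdeg b)%N.
Proof. by move/mnm_lepP => ab; rewrite !mdegE; apply: leq_sum => i _. Qed.

Lemma mdeg_subm a b : (a <= b)%MM -> mdeg (b - a) = (mdeg b - mdeg a)%N.
Proof. by move=> ab; rewrite -{2}(submK ab) mdegD addnK. Qed.

Lemma lem_mdeg_eq a b : (a <= b)%MM -> mdeg a = mdeg b -> a = b.
Proof.
move=> ab eq_ab; have /eqP := mdeg_subm ab; rewrite eq_ab subnn mdeg_eq0 => /eqP ba.
by rewrite -(submK ab) ba add0m.
Qed.

Lemma mnm_le_mdeg a j : (a j <= mdeg a)%N.
Proof. by rewrite mdegE (bigD1 j) //= leq_addr. Qed.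

Lemma mdeg_gt0P a : (0 < mdeg a)%N -> exists j, (0 < a j)%N.
Proof.
move=> a_gt0; apply/existsP; apply: contraTT a_gt0 => /existsPn a0.
by rewrite mdegE big1 // => j _; move: (a0 j); rewrite lt0n negbK => /eqP.
Qed.

Lemma lem_within_addr S a b c : mnm_within S c -> (forall j, S j -> b j = 0%N) ->
  (c <= a + b)%MM -> (c <= a)%MM.
Proof.
move=> /mnm_withinP cS b0 /mnm_lepP c_le; apply/mnm_lepP => j.
case: (posnP (c j)) => [-> // | cj]; move: (c_le j).
by rewrite mnmDE b0 ?addn0 //; apply: cS.
Qed.

Lemma mnm_supp1 c i : (forall k, k != i -> c k = 0%N) -> c = (U_(i) *+ mdeg c)%MM.
Proof.
move=> c0; have ci : c i = mdeg c.
  by rewrite mdegE (bigD1 i) //= big1 ?addn0 // => k; apply: c0.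
apply/mnmP => k; rewrite mulmnE mnm1E; case: eqP => [<-|/eqP ik]; first by rewrite ci mul1n.
by rewrite mul0n c0 // eq_sym.
Qed.

End Monomials.

Section Coefficients.
Variables (R : comNzRingType) (N : nat).
Implicit Types (p r : {mpoly R[N]}).

Lemma mcoeffXM p (a b : 'X_{1..N}) :
  ('X_[a] * p)@_b = if (a <= b)%MM then p@_(b - a) else 0.
Proof.
case: ifP => ab; first by rewrite -{1}(submK ab) addmC mulrC mcoeffMX.
apply/memN_msupp_eq0; rewrite mulrC (perm_mem (msuppMX p a)).
by apply/mapP => -[c _ bE]; move: ab; rewrite bE lem_addr.
Qed.

Lemma mcoeffM_msupp r p b : (r * p)@_b =
  \sum_(c <- msupp p) p@_c * (if (c <= b)%MM then r@_(b - c) else 0).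
Proof.
rewrite {1}(mpolyE p) mulr_sumr raddf_sum /=; apply: eq_bigr => c _.
by rewrite -scalerAr mcoeffZ [r * _]mulrC mcoeffXM.
Qed.

Lemma mcoeff_frob_deriv q p b : (frob_deriv q p)@_b =
  \sum_(k < N) if (U_(k) *+ q <= b)%MM then (mderiv k p)@_(b - U_(k) *+ q) else 0.
Proof.
rewrite raddf_sum; apply: eq_bigr => k _.
by rewrite (_ : 'X_k ^+ q = 'X_[U_(k) *+ q]) ?mpolyXn //; apply: mcoeffXM.
Qed.

Lemma msupp_mderiv k p c : c \in msupp (mderiv k p) -> (c + U_(k))%MM \in msupp p.
Proof. by rewrite !mcoeff_msupp mcoeff_mderiv; apply: contraNneq => ->; rewrite mul0rn. Qed.

Lemma dhomog_mderiv k p d : p \is d.-homog -> mderiv k p \is d.-1.-homog.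
Proof.
move=> /dhomogP p_homog; apply/dhomogP => c /msupp_mderiv /p_homog /= <-.
by rewrite mdegD mdeg1 addn1.
Qed.

Lemma separated_mderiv (S T : pred 'I_N) k p :
  separated S T p -> separated S T (mderiv k p).
Proof.
move=> p_sep c /msupp_mderiv /p_sep.
have sub_within U : mnm_within U (c + U_(k)) -> mnm_within U c.
  by move=> /mnm_withinP cU; apply/mnm_withinP => j cj; apply: cU; rewrite mnmDE ltn_addr.
by case/orP => /sub_within ->; rewrite ?orbT.
Qed.

End Coefficients.

Section SeparatedFrobenius.
Variables (K : idomainType) (N q : nat) (S T : pred 'I_N) (P C : {mpoly K[N]}).
Hypotheses (q_gt1 : (1 < q)%N) (q_eq0 : q%:R = 0 :> K)
  (disjST : forall i, S i -> T i -> False)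
  (P_homog : P \is (q + 2).-homog) (P_sep : separated S T P)
  (P_frob : frob_deriv q P = C * P).

Let mdeg_supp : {in msupp P, forall m, mdeg m = (q + 2)%N}.
Proof. exact/dhomogP. Qed.

Let notT_S j : S j -> ~~ T j.
Proof. by move=> Sj; apply/negP; apply: disjST. Qed.

Let notS_T j : T j -> ~~ S j.
Proof. by move=> Tj; apply/negP => /disjST; apply. Qed.

Lemma mcoeff_mixed_eq0 (a : 'X_{1..N}) i j :
  S i -> ~~ S j -> (0 < a i)%N -> (0 < a j)%N -> P@_a = 0.
Proof.
move=> Si nSj ai aj; apply/memN_msupp_eq0/negP => /P_sep /orP[] /mnm_withinP a_in.
  by move/negP: nSj; apply; apply: a_in.
exact: disjST Si (a_in i ai).
Qed.

Variables (mu : 'X_{1..N}) (mu_supp : mu \in msupp P) (mu_T : mnm_within T mu).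

Lemma mcoeffC_within_eq0 g : mnm_within S g -> mdeg g = q.-1 -> C@_g = 0.
Proof.
move=> g_S deg_g.
(* Compare coefficients at g + mu: on the left every monomial of P that could
   contribute is mixed, on the right only c = mu survives. *)
have mu_S0 j : S j -> mu j = 0%N by move/notT_S; apply: mnm_within_out.
have g_T0 j : T j -> g j = 0%N by move/notS_T; apply: mnm_within_out.
have := congr1 (mcoeff (g + mu)%MM) P_frob.
rewrite mcoeff_frob_deriv big1 => [|k _]; last first.
  case: ifP => // /mnm_lepP /(_ k) le_qk.
  have nSk : ~~ S k.
    apply/negP => Sk; move: le_qk; rewrite mnmDE mu_S0 // mulmnE mnm1E eqxx.
    by have := mnm_le_mdeg g k; rewrite deg_g; lia.
  have [j gj] : exists j, (0 < g j)%N by apply: mdeg_gt0P; rewrite deg_g; lia.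
  have Sj := mnm_withinP _ _ g_S j gj.
  have jk : (k == j) = false by apply: contraNF nSk => /eqP ->.
  rewrite mcoeff_mderiv (mcoeff_mixed_eq0 Sj nSk) ?mul0rn //.
    by rewrite !(mnmDE, mnmBE, mulmnE, mnm1E) jk; lia.
  by move: le_qk; rewrite !(mnmDE, mnmBE, mulmnE, mnm1E) eqxx; lia.
rewrite mcoeffM_msupp (bigD1_seq mu) ?msupp_uniq //= lem_addl addmK.
rewrite big1_seq ?addr0 => [|c /andP[c_mu c_supp]]; last first.
  case: ifP => [c_le|]; last by rewrite mulr0.
  exfalso; case/orP: (P_sep c_supp) => c_in.
    have /mdeg_lem := lem_within_addr c_in mu_S0 c_le.
    by rewrite (mdeg_supp c_supp) deg_g; lia.
  rewrite addmC in c_le; have /lem_mdeg_eq := lem_within_addr c_in g_T0 c_le.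
  by rewrite (mdeg_supp c_supp) (mdeg_supp mu_supp) => /(_ erefl) c_eq; rewrite c_eq eqxx in c_mu.
move/esym/eqP; rewrite mulf_eq0 => /orP[] /eqP // P_mu0.
by move: mu_supp; rewrite mcoeff_msupp P_mu0 eqxx.
Qed.

Lemma mcoeffCP_within_eq0 nu :
  mnm_within S nu -> mdeg nu = (2 * q + 1)%N -> (C * P)@_nu = 0.
Proof.
move=> /mnm_withinP nu_S deg_nu; rewrite mcoeffM_msupp big1_seq // => c /andP[_ c_supp].
case: ifP => c_nu; last by rewrite mulr0.
rewrite mcoeffC_within_eq0 ?mulr0 //; last by rewrite mdeg_subm // deg_nu mdeg_supp //; lia.
by apply/mnm_withinP => j; rewrite mnmBE => ?; apply: nu_S; lia.
Qed.

Lemma mcoeff_mderiv_pure_power_eq0 i0 k :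
  S i0 -> (mderiv k P)@_(U_(i0) *+ (q + 1)) = 0.
Proof.
move=> Si0; rewrite mcoeff_mderiv.
have [Sk|nSk] := boolP (S k); last first.
  by rewrite (mcoeff_mixed_eq0 Si0 nSk) ?mul0rn // !(mnmDE, mulmnE, mnm1E) eqxx; lia.
(* At nu only the term x_i0^q d/dx_i0 of frob_deriv contributes, and q = 0 in
   K turns its multiplicity into that of (mderiv k P)@_(U_(i0) *+ (q + 1)). *)
pose nu := (U_(i0) *+ (2 * q) + U_(k))%MM.
have := congr1 (mcoeff nu) P_frob; rewrite mcoeffCP_within_eq0; first last.
- by rewrite mdegD mdegMn !mdeg1 mul1n.
- apply/mnm_withinP => j; rewrite mnmDE mulmnE !mnm1E.
  by case: eqP => [<- //|_]; case: eqP => [<- //|_]; rewrite mul0n.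
rewrite mcoeff_frob_deriv (bigD1 i0) //= big1 ?addr0 => [|l l_i0]; last first.
  case: ifP => // /mnm_lepP /(_ l).
  by rewrite mnmDE !mulmnE !mnm1E eqxx eq_sym (negbTE l_i0); case: (k == l); lia.
have -> : (U_(i0) *+ q <= nu)%MM.
  by apply/mnm_lepP => j; rewrite mnmDE !mulmnE; lia.
rewrite mcoeff_mderiv (_ : (nu - U_(i0) *+ q + U_(i0))%MM = U_(i0) *+ (q + 1) + U_(k))%MM;
  last by apply/mnmP => l; rewrite !(mnmDE, mnmBE, mulmnE, mnm1E);
           case: (i0 == l); case: (k == l) => /=; lia.
rewrite mnmBE mnmDE !mulmnE !mnm1E eqxx; case: eqP => [<-|ik].
  by rewrite eqxx => <-; congr (_ *+ _); lia.
rewrite (_ : (i0 == k) = false) ?mul0n; last by rewrite eq_sym; apply/negbTE/eqP.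
rewrite (_ : (_ - _).+1 = q.+1); last lia.
by rewrite mulrSr -mulr_natr q_eq0 mulr0 add0r => <-.
Qed.

End SeparatedFrobenius.

Definition singular_at (R : comNzRingType) (N : nat) (p : {mpoly R[N]}) (x : 'I_N -> R) :=
  p.@[x] = 0 /\ forall k, (mderiv k p).@[x] = 0.

Definition pair_point (R : nzRingType) (N : nat) (i j : 'I_N) (s t : R) : 'I_N -> R :=
  fun k => if k == i then s else if k == j then t else 0.

Lemma mcoeff_sum_msupp (R : nzRingType) (N : nat) (p : {mpoly R[N]}) m :
  \sum_(c <- msupp p) p@_c * (c == m)%:R = p@_m.
Proof.
by rewrite [in RHS](mpolyE p) raddf_sum /=; apply: eq_bigr => c _; rewrite mcoeffZ mcoeffX.
Qed.

Lemma mcoeff_outside_eq0 (R : nzRingType) (N : nat) (S T : pred 'I_N) (p : {mpoly R[N]}) m :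
  separated S T p -> ~~ has (mnm_within T) (msupp p) -> ~~ mnm_within S m -> p@_m = 0.
Proof.
move=> p_sep /hasPn noT mS; apply/memN_msupp_eq0; apply: contra mS => m_supp.
by case/orP: (p_sep _ m_supp) => // mT; move: (noT _ m_supp); rewrite mT.
Qed.

Section PairPoint.
Variables (R : comNzRingType) (N : nat) (S T : pred 'I_N) (i j : 'I_N) (s t : R).
Hypotheses (disjST : forall k, S k -> T k -> False) (Si : S i) (Tj : T j).
Local Notation y := (pair_point i j s t).

Lemma pair_point_neq : (j == i) = false.
Proof. by apply/eqP => ji; apply: (disjST Si); rewrite -ji. Qed.

Lemma pair_point_l : y i = s.
Proof. by rewrite /pair_point eqxx. Qed.

Lemma pair_point_r : y j = t.
Proof. by rewrite /pair_point pair_point_neq eqxx. Qed.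

Lemma mevalX_pair_point (c : 'X_{1..N}) D :
  (0 < D)%N -> mdeg c = D -> mnm_within S c || mnm_within T c ->
  'X_[c].@[y] = (c == (U_(i) *+ D)%MM)%:R * s ^+ D + (c == (U_(j) *+ D)%MM)%:R * t ^+ D.
Proof.
move=> D_gt0 deg_c c_sep.
have power_neq l l' : l != l' -> ((U_(l) *+ D)%MM == (U_(l') *+ D)%MM) = false.
  move=> ll'; apply/negbTE; apply: contra ll' => /eqP/mnmP/(_ l).
  by rewrite !mulmnE !mnm1E eqxx eq_sym; case: (l == l'); rewrite ?mul0n //; lia.
case: (pickP (fun k => (k != i) && (k != j) && (0 < c k)%N)) =>
  [k /andP[/andP[ki kj] ck] | c_ij].
  have c_neq l : k != l -> (c == (U_(l) *+ D)%MM) = false.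
    by move=> kl; apply: contraTF ck => /eqP ->; rewrite mulmnE mnm1E eq_sym (negbTE kl).
  rewrite mevalX (bigD1 k) //= /pair_point (negbTE ki) (negbTE kj) expr0n (gtn_eqF ck).
  by rewrite mul0r !c_neq // !mul0r addr0.
have c_out l : l != i -> l != j -> c l = 0%N.
  by move=> li lj; move: (c_ij l); rewrite li lj /= lt0n => /negbFE/eqP.
have mevalXn l : 'X_[U_(l) *+ D].@[y] = y l ^+ D by rewrite -mpolyXn rmorphXn /= mevalXU.
case/orP: c_sep => c_in.
  have -> : c = (U_(i) *+ D)%MM.
    rewrite -deg_c; apply: mnm_supp1 => l li; have [->|lj] := eqVneq l j; last exact: c_out.
    by apply: mnm_within_out c_in _; apply/negP => /disjST; apply.
  by rewrite mevalXn pair_point_l eqxx power_neq 1?eq_sym ?pair_point_neq // mul1r mul0r addr0.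
have -> : c = (U_(j) *+ D)%MM.
  rewrite -deg_c; apply: mnm_supp1 => l lj; have [->|li] := eqVneq l i; last exact: c_out.
  by apply: mnm_within_out c_in _; apply/negP; apply: disjST.
by rewrite mevalXn pair_point_r eqxx power_neq ?pair_point_neq // mul1r mul0r add0r.
Qed.

Lemma meval_pair_point (p : {mpoly R[N]}) D :
  (0 < D)%N -> p \is D.-homog -> separated S T p ->
  p.@[y] = p@_(U_(i) *+ D) * s ^+ D + p@_(U_(j) *+ D) * t ^+ D.
Proof.
move=> D_gt0 /dhomogP p_homog p_sep; rewrite {1}(mpolyE p) raddf_sum /=.
under eq_big_seq => c c_supp do
  rewrite mevalZ (mevalX_pair_point D_gt0 (p_homog c c_supp) (p_sep c c_supp)) mulrDr !mulrA.
by rewrite big_split /= -!mulr_suml !mcoeff_sum_msupp.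
Qed.

Lemma singular_at_pair_point (p : {mpoly R[N]}) d :
  (1 < d)%N -> p \is d.-homog -> separated S T p ->
  p@_(U_(i) *+ d) * s ^+ d + p@_(U_(j) *+ d) * t ^+ d = 0 ->
  s = 0 \/ (forall k, (mderiv k p)@_(U_(i) *+ d.-1) = 0) ->
  t = 0 \/ (forall k, (mderiv k p)@_(U_(j) *+ d.-1) = 0) ->
  singular_at p y.
Proof.
move=> d_gt1 p_homog p_sep p_y s_ok t_ok; split.
  by rewrite (meval_pair_point _ p_homog p_sep) //; lia.
move=> k; have dp_homog := dhomog_mderiv k p_homog.
rewrite (meval_pair_point _ dp_homog (separated_mderiv p_sep)); last lia.
have d1_neq0 : d.-1 != 0%N by lia.
by case: s_ok => [->|->]; case: t_ok => [->|->];
  rewrite ?expr0n ?(negbTE d1_neq0) ?mulr0 ?mul0r ?addr0.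
Qed.

End PairPoint.

Lemma singular_at_cone (R : comNzRingType) (N d : nat) (S T : pred 'I_N) (i j : 'I_N)
    (p : {mpoly R[N]}) :
  (forall k, S k -> T k -> False) -> S i -> T j ->
  (1 < d)%N -> p \is d.-homog -> separated S T p -> ~~ has (mnm_within T) (msupp p) ->
  singular_at p (pair_point i j 0 1).
Proof.
move=> disjST Si Tj d_gt1 p_homog p_sep noT.
have p0 (m : 'X_{1..N}) : (0 < m j)%N -> p@_m = 0.
  move=> mj; apply: mcoeff_outside_eq0 p_sep noT _.
  by apply/negP => /mnm_withinP/(_ j mj) /disjST; apply.
apply: singular_at_pair_point p_homog p_sep _ _ _ => //; [|by left|right => k].
  by rewrite expr0n gtn_eqF 1?ltnW // mulr0 p0 ?mul0r ?add0r // mulmnE mnm1E eqxx; lia.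
by rewrite mcoeff_mderiv p0 ?mul0rn // mnmDE mulmnE mnm1E eqxx; lia.
Qed.

Lemma exists_root_pair (L : closedFieldType) (a b : L) d :
  (0 < d)%N -> exists s t : L, (s != 0) || (t != 0) /\ a * s ^+ d + b * t ^+ d = 0.
Proof.
move=> d_gt0; have [-> | a_neq0] := eqVneq a 0.
  by exists 1, 0; rewrite oner_eq0 mul0r expr0n gtn_eqF // mulr0 addr0.
have [x x_root] := @solve_monicpoly L d (fun k => if k == 0%N then - b / a else 0) d_gt0.
exists x, 1; split; first by rewrite oner_eq0 orbT.
move: x_root; rewrite -(prednK d_gt0) big_ord_recl /= big1 => [x_root|k _]; last by rewrite mul0r.
by rewrite expr0 mulr1 addr0 in x_root; rewrite expr1n mulr1 x_root mulrC divfK // addrC subrr.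
Qed.

Theorem separated_frob_singular (L : closedFieldType) (N q : nat) (S T : pred 'I_N)
    (P C : {mpoly L[N]}) (i j : 'I_N) :
  (1 < q)%N -> q%:R = 0 :> L -> (forall k, S k -> T k -> False) ->
  P \is (q + 2).-homog -> separated S T P -> frob_deriv q P = C * P -> S i -> T j ->
  exists2 x : 'I_N -> L, (exists k, x k != 0) & singular_at P x.
Proof.
move=> q_gt1 q_eq0 disjST P_homog P_sep P_frob Si Tj.
have disjTS k : T k -> S k -> False by move=> Tk /disjST; apply.
have sepTS : separated T S P by move=> m /P_sep; rewrite orbC.
have d_gt1 : (1 < q + 2)%N by rewrite addn2.
have [hasT|noT] := boolP (has (mnm_within T) (msupp P)); last first.
  exists (pair_point i j 0 1); last exact: singular_at_cone disjST Si Tj d_gt1 P_homog P_sep noT.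
  by exists j; rewrite (pair_point_r _ _ disjST Si Tj) oner_neq0.
have [hasS|noS] := boolP (has (mnm_within S) (msupp P)); last first.
  exists (pair_point j i 0 1); last exact: singular_at_cone disjTS Tj Si d_gt1 P_homog sepTS noS.
  by exists i; rewrite (pair_point_r _ _ disjTS Tj Si) oner_neq0.
have [mu mu_supp mu_T] := hasP hasT; have [nu nu_supp nu_S] := hasP hasS.
have [s [t [st_nz st_root]]] := exists_root_pair
  (P@_(U_(i) *+ (q + 2))) (P@_(U_(j) *+ (q + 2))) (ltnW d_gt1).
exists (pair_point i j s t).
  case/orP: st_nz => ?; [exists i; rewrite pair_point_l |
                         exists j; rewrite (pair_point_r _ _ disjST Si Tj)] => //.
have d1 : (q + 2).-1 = (q + 1)%N by rewrite addn2 addn1.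
apply: (singular_at_pair_point disjST Si Tj) st_root _ _ => //; right => k; rewrite d1.
  exact: mcoeff_mderiv_pure_power_eq0 q_gt1 q_eq0 disjST P_homog P_sep P_frob _ mu_supp mu_T _ k Si.
exact: mcoeff_mderiv_pure_power_eq0 q_gt1 q_eq0 disjTS P_homog sepTS P_frob _ nu_supp nu_S _ k Tj.
Qed.

Definition lin_map (R : nzRingType) (N : nat) (A : 'M[R]_N) (y : 'I_N -> R) : 'I_N -> R :=
  fun i => \sum_j A i j * y j.

Lemma meval_lin_subst (R : comNzRingType) (N : nat) (A : 'M[R]_N) (p : {mpoly R[N]}) y :
  (p \mPo lin_subst A).@[y] = p.@[lin_map A y].
Proof.
rewrite comp_mpoly_meval; apply: meval_eq => i; rewrite tnth_mktuple raddf_sum /lin_map.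
by under eq_bigr do rewrite /= mevalM mevalC mevalXU.
Qed.

Section SingularLinSubst.
Variables (R : fieldType) (N : nat) (A : 'M[R]_N).
Hypothesis A_unit : A \in unitmx.

Lemma singular_at_lin_subst (p : {mpoly R[N]}) y :
  singular_at (p \mPo lin_subst A) y -> singular_at p (lin_map A y).
Proof.
case=> p_y dp_y; split; first by rewrite -meval_lin_subst.
pose w := \row_i (mderiv i p).@[lin_map A y].
have A_free : row_free A by rewrite row_free_unit.
suff /eqP : w *m A = 0 by rewrite mulmx_free_eq0 // => /eqP/rowP w0 i; move: (w0 i); rewrite !mxE.
apply/rowP => k; rewrite !mxE -[RHS](dp_y k) mderiv_lin_subst raddf_sum /=.
by apply: eq_bigr => i _; rewrite mevalZ meval_lin_subst !mxE mulrC.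
Qed.

Lemma lin_map_neq0 y : (exists j, y j != 0) -> exists i, lin_map A y i != 0.
Proof.
move=> [j yj]; apply/existsP; apply: contraTT yj => /existsPn Ay0.
have /eqP : \row_j y j *m A^T = 0.
  apply/rowP => i; rewrite !mxE -[RHS](eqP (negPn (Ay0 i))).
  by apply: eq_bigr => l _; rewrite !mxE mulrC.
have AT_free : row_free A^T by rewrite row_free_unit unitmx_tr.
by rewrite mulmx_free_eq0 // => /eqP/rowP/(_ j); rewrite !mxE => ->; rewrite eqxx.
Qed.

End SingularLinSubst.

Section MapMpoly.
Variables (K L : fieldType) (f : {rmorphism K -> L}) (N : nat).
Implicit Types (p : {mpoly K[N]}).

Lemma map_mderiv k p : map_mpoly f (mderiv k p) = mderiv k (map_mpoly f p).
Proof.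
by apply/mpolyP => m; rewrite mcoeff_map_mpoly !mcoeff_mderiv mcoeff_map_mpoly raddfMn.
Qed.

Lemma map_frob_deriv q p : map_mpoly f (frob_deriv q p) = frob_deriv q (map_mpoly f p).
Proof.
rewrite rmorph_sum; apply: eq_bigr => i _.
by rewrite rmorphM rmorphXn /= map_mpolyX map_mderiv.
Qed.

Lemma map_lin_subst (A : 'M[K]_N) p :
  map_mpoly f (p \mPo lin_subst A) = map_mpoly f p \mPo lin_subst (map_mx f A).
Proof.
rewrite map_mpoly_comp; last exact: fmorph_inj.
congr comp_mpoly; apply: eq_from_tnth => i; rewrite tnth_map !tnth_mktuple rmorph_sum.
by apply: eq_bigr => j _; rewrite rmorphM /= map_mpolyC map_mpolyX mxE.
Qed.

Lemma msupp_map p : msupp (map_mpoly f p) =i msupp p.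
Proof. exact/perm_mem/msupp_map_mpoly/fmorph_inj. Qed.

Lemma dhomog_map d p : p \is d.-homog -> map_mpoly f p \is d.-homog.
Proof. by move=> /dhomogP p_homog; apply/dhomogP => m; rewrite msupp_map; apply: p_homog. Qed.

Lemma separated_map (S T : pred 'I_N) p : separated S T p -> separated S T (map_mpoly f p).
Proof. by move=> p_sep m; rewrite msupp_map; apply: p_sep. Qed.

End MapMpoly.

Lemma separated_add (R : nzRingType) (N : nat) (S T : pred 'I_N) (p r : {mpoly R[N]}) :
  vars_in S p -> vars_in T r -> separated S T (p + r).
Proof.
move=> p_S r_T m /msuppD_le; rewrite mem_cat.
by case/orP => m_supp; apply/orP; [left | right]; apply/mnm_withinP => i /lt0n_neq0;
  [apply: p_S | apply: r_T].
Qed.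

Unset Implicit Arguments.

Theorem lemma5p1 (K : finFieldType) (n : nat) (F : {mpoly K[n.+1]}) :
  (2 <= n)%N ->
  F != 0 ->
  F \is (#|K| + 2)%N.-homog ->
  smooth_hypersurface F ->
  frob_nonclassical F ->
  ~ separated_variables F.
Proof.
move=> _ _ F_homog F_smooth [C F_frob] [A [m [G [H [A_unit m_lt_n G_vars H_vars F_sep]]]]].
have [L [f _]] := countable_algebraic_closure K.
pose S : pred 'I_n.+1 := fun i => (i <= m)%N.
pose T : pred 'I_n.+1 := fun i => (m < i)%N.
have disjST k : S k -> T k -> False by rewrite /S /T /=; lia.
pose P := map_mpoly f (F \mPo lin_subst A).
have q_gt1 : (1 < #|K|)%N := finNzRing_gt1 K.
have q_eq0 : #|K|%:R = 0 :> L by rewrite -(rmorph_nat f) natr_card_finField rmorph0.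
have P_homog : P \is (#|K| + 2).-homog := dhomog_map f (dhomog_lin_subst A F_homog).
have P_sep : separated S T P by apply/separated_map; rewrite F_sep; apply: separated_add.
have P_frob : frob_deriv #|K| P = map_mpoly f (C \mPo lin_subst A) * P.
  by rewrite -map_frob_deriv (frob_deriv_lin_subst _ F_frob) rmorphM.
have [y y_neq0 P_y] := separated_frob_singular q_gt1 q_eq0 disjST P_homog P_sep P_frob
  (i := ord0) (j := Ordinal (m_lt_n : m.+1 < n.+1)%N) erefl (ltnSn m).
have fA_unit : map_mx f A \in unitmx by rewrite map_unitmx.
have [F_x dF_x] : singular_at (map_mpoly f F) (lin_map (map_mx f A) y).
  by apply: (singular_at_lin_subst fA_unit); rewrite -map_lin_subst.
apply: (F_smooth L f _ (lin_map_neq0 fA_unit y_neq0)).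
by split => // k; rewrite map_mderiv.
Qed.
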